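(* For all integers $n\geq 1$ and $k\geq 0$, the map $\varphi$ is an involution on $A_{n,k}$, i.e. $\varphi(\varphi(\pi))=\pi$ for every $\pi\in A_{n,k}$.
   Context: For a permutation $\pi=\pi_1\cdots\pi_n$ of $[n]=\{1,\dots,n\}$, $\mathrm{des}(\pi)$ is the number of $m\in[n-1]$ with $\pi_m>\pi_{m+1}$, and $\mathrm{maxdrop}(\pi)=\max\{m-\pi_m:1\leq m\leq n\}$. $A_{n,k}$ is the set of permutations of $[n]$ with $\mathrm{maxdrop}(\pi)\leq k$. For a permutation $\sigma$ of $[n-1]$ and $1\leq r\leq n$, $\sigma\leftarrow r$ is the permutation of $[n]$ obtained by increasing every entry of $\sigma$ that is $\geq r$ by $1$ and then appending $r$ at the end. The map $\varphi:A_{n,k}\to A_{n,k}$ is defined recursively: $\varphi(1)=1$; for $n\geq 2$ and $\pi\in A_{n,k}$, let $i=\mathrm{des}(\pi)$, $j=\pi_n-n+k$, $i'=\lfloor((n+1)k-(k+1)i-j)/(k+1)\rfloor$, $j'=(n+1)k-(k+1)i-j-(k+1)i'$, let $\pi'$ be the permutation of $[n-1]$ order-isomorphic to $\pi_1\cdots\pi_{n-1}$, and set $\varphi(\pi)=\varphi(\pi')\leftarrow(n-k+j')$. *)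

(* Permutations of [n] are sequences of naturals with
   entries 1..n (one-line notation), pi_m = nth 0 s (m-1). *)
From mathcomp Require Import all_boot all_order all_algebra.
Set Implicit Arguments. Unset Strict Implicit. Unset Printing Implicit Defensive.
Import GRing.Theory Num.Theory.

Definition is_perm (n : nat) (s : seq nat) : bool := perm_eq s (iota 1 n).

Definition des (s : seq nat) : nat :=
  count (fun m => nth 0 s m.+1 < nth 0 s m) (iota 0 (size s).-1).

(* Computed with truncated nat
   subtraction; since some pi_m = 1 with m >= 1, the true maximum is >= 0,
   so this agrees with the integer definition on permutations. *)
Definition maxdrop (s : seq nat) : nat :=
  foldr maxn 0 [seq m.+1 - nth 0 s m | m <- iota 0 (size s)].

Definition A (n k : nat) (s : seq nat) : bool := is_perm n s && (maxdrop s <= k).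

Definition std (s : seq nat) : seq nat :=
  [seq (count (fun y => y < x) s).+1 | x <- s].

Definition ins (s : seq nat) (r : nat) : seq nat :=
  rcons [seq (if r <= x then x.+1 else x) | x <- s] r.

Local Open Scope ring_scope.

Definition phi_last (n k : nat) (s : seq nat) : int :=
  let i : int := (des s)%:Z in
  let j : int := (nth 0%N s n.-1)%:Z - n%:Z + k%:Z in
  let num : int := ((n.+1 * k)%N)%:Z - (k.+1)%:Z * i - j in
  let i' : int := (num %/ (k.+1)%:Z)%Z in
  let j' : int := num - (k.+1)%:Z * i' in
  n%:Z - k%:Z + j'.

Fixpoint phi (k n : nat) (s : seq nat) : seq nat :=
  match n with
  | 0%N => [::]
  | p.+1 =>
    if p is 0%N then [:: 1%N]
    else ins (phi k p (std (take p s))) (absz (phi_last p.+1 k s))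
  end.

From mathcomp Require Import all_boot all_order all_algebra.
From mathcomp Require Import zify.
Set Implicit Arguments. Unset Strict Implicit. Unset Printing Implicit Defensive.
Import GRing.Theory Num.Theory.

(* Encode the statistics (i, j) = (des pi, pi_n - n + k) of pi in A_{n,k} as
   the single integer code pi = (k+1) i + j, with 0 <= j <= k.  The last letter
   appended by phi is chosen so that the j-value of phi pi is the residue of
   (n+1) k - code pi modulo k + 1.  By induction on n one proves simultaneously
   that phi pi lies in A_{n,k}, that code pi + code (phi pi) = (n+1) k, and
   that phi is an involution.  Appending a letter creates a new descent exactly
   when the new j-value is smaller than the previous one; since the two new
   j-values sum to the two old ones plus k modulo k + 1, the number of such
   descents is exactly the carry, which keeps the codes complementary.  This
   complementarity makes phi (phi pi) end with pi_n, and its prefix is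
   phi (phi pi') = pi' by induction. *)

Lemma is_permP n s :
  reflect [/\ uniq s, size s = n & forall x, x \in s -> 0 < x <= n] (is_perm n s).
Proof.
apply: (iffP idP) => [P | [Us Ss Hs]].
  split; first by rewrite (perm_uniq P) iota_uniq.
    by rewrite (perm_size P) size_iota.
  by move=> x; rewrite (perm_mem P) mem_iota; lia.
apply: uniq_perm => //; first exact: iota_uniq.
have sub_s : {subset s <= iota 1 n} by move=> x /Hs; rewrite mem_iota; lia.
by have [] := uniq_min_size Us sub_s; rewrite ?size_iota ?Ss.
Qed.

Lemma mem_is_perm n s x : is_perm n s -> (x \in s) = (0 < x <= n).
Proof. by move/perm_mem->; rewrite mem_iota; lia. Qed.

Lemma count_lt_iota x m n : count (fun y => y < x) (iota m n) = minn (m + n) x - m.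
Proof. by elim: n m => [|n IH] m /=; [lia | rewrite IH; lia]. Qed.

Lemma count_lt_is_perm n s x :
  is_perm n s -> count (fun y => y < x) s = minn n.+1 x - 1.
Proof. by move/permP->; rewrite count_lt_iota add1n. Qed.

Lemma rcons_take_nth (T : Type) (x0 : T) p s :
  size s = p.+1 -> rcons (take p s) (nth x0 s p) = s.
Proof. by move=> Ss; rewrite -take_nth ?Ss // take_oversize ?Ss. Qed.

Lemma nth_notin_take p s : is_perm p.+1 s -> nth 0 s p \notin take p s.
Proof.
case/is_permP=> Us Ss _.
by have := Us; rewrite -{1}(rcons_take_nth 0 Ss) rcons_uniq => /andP[].
Qed.

Lemma ltn_bump2 h i j : (bump h i < bump h j) = (i < j).
Proof. by rewrite !ltnNge leq_bump2. Qed.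

Lemma insE s r : ins s r = rcons (map (bump r) s) r.
Proof. by congr rcons; apply: eq_map => x; rewrite /bump; case: leqP. Qed.

Lemma std_map_mono f s : {mono f : x y / x < y} -> std (map f s) = std s.
Proof.
move=> mono_f; rewrite /std -map_comp; apply: eq_map => x /=.
by rewrite count_map; congr S; apply: eq_count => y /=; rewrite mono_f.
Qed.

Lemma std_is_perm n s : is_perm n s -> std s = s.
Proof.
move=> P; apply: map_id_in => x xs.
by rewrite (count_lt_is_perm _ P); move: xs; rewrite (mem_is_perm _ P); lia.
Qed.

Lemma std_take_ins n s r : is_perm n s -> std (take n (ins s r)) = s.
Proof.
move=> P; have [_ Ss _] := is_permP _ _ P.
rewrite insE -cats1 take_size_cat ?size_map // std_map_mono ?(std_is_perm P) //.
exact: ltn_bump2.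
Qed.

Lemma std_take_unbump p s :
  is_perm p.+1 s -> std (take p s) = map (unbump (nth 0 s p)) (take p s).
Proof.
move=> P; have [_ Ss _] := is_permP _ _ P.
apply/eq_in_map => x xt /=.
have xs : x \in s by rewrite -(rcons_take_nth 0 Ss) mem_rcons in_cons xt orbT.
have := count_lt_is_perm x P; rewrite -{1}(rcons_take_nth 0 Ss) -cats1 count_cat /=.
by move: xs; rewrite (mem_is_perm _ P) /unbump; lia.
Qed.

Lemma ins_std_take p s : is_perm p.+1 s -> ins (std (take p s)) (nth 0 s p) = s.
Proof.
move=> P; have [_ Ss _] := is_permP _ _ P.
rewrite (std_take_unbump P) insE -map_comp -[RHS](rcons_take_nth 0 Ss); congr rcons.
apply: map_id_in => x xt; apply: unbumpK.
by apply: contraNneq (nth_notin_take P) => <-.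
Qed.

Lemma maxdrop_leq s k :
  (maxdrop s <= k) = all (fun m => m.+1 - nth 0 s m <= k) (iota 0 (size s)).
Proof. by rewrite /maxdrop; elim: (iota 0 (size s)) => //= a l IH; rewrite geq_max IH. Qed.

Lemma AP n k s :
  A n k s <-> is_perm n s /\ (forall m, m < n -> m.+1 - nth 0 s m <= k).
Proof.
rewrite /A maxdrop_leq; split=> [/andP[P /allP drop_s] | [P drop_s]].
  have [_ Ss _] := is_permP _ _ P.
  by split=> // m mn; apply: drop_s; rewrite mem_iota Ss.
have [_ Ss _] := is_permP _ _ P.
by rewrite P; apply/allP => m; rewrite mem_iota Ss => /andP[_]; apply: drop_s.
Qed.

Lemma A1 k s : A 1 k s -> s = [:: 1].
Proof. by case/andP=> P _; apply: perm_small_eq P. Qed.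

Lemma A_last n k s : A n.+1 k s -> 0 < nth 0 s n <= n.+1 /\ n.+1 - nth 0 s n <= k.
Proof.
case/AP=> P drop_s; have [_ Ss _] := is_permP _ _ P.
by rewrite -(mem_is_perm _ P) mem_nth ?Ss //; split=> //; apply: drop_s.
Qed.

Lemma A_std_take p k s : A p.+1 k s -> A p k (std (take p s)).
Proof.
move=> As; have /AP[P drop_s] := As; have [Us Ss _] := is_permP _ _ P.
have [v_range v_drop] := A_last As.
rewrite (std_take_unbump P); set v := nth 0 s p in v_range v_drop *.
have v_notin : v \notin take p s := nth_notin_take P.
have neq_v x : x \in take p s -> x != v by move=> xt; apply: contraNneq v_notin => <-.
have St : size (take p s) = p by rewrite size_takel ?Ss.
apply/AP; split.
  apply/is_permP; split; rewrite ?size_map //.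
    rewrite map_inj_in_uniq.
      by have := Us; rewrite -{1}(rcons_take_nth 0 Ss) rcons_uniq => /andP[].
    by move=> x y /neq_v xv /neq_v yv /(congr1 (bump v)); rewrite !unbumpK.
  move=> _ /mapP[x xt ->]; have xv := neq_v x xt.
  move: (mem_take xt); rewrite (mem_is_perm _ P) /unbump; move: xv; lia.
move=> m mp; rewrite (nth_map 0) ?St // nth_take //.
have := drop_s m (leqW mp); have := mem_nth 0 (_ : m < size s).
rewrite Ss (mem_is_perm _ P) /unbump => /(_ (leqW mp)).
lia.
Qed.

Lemma A_ins p k s r : A p k s -> 0 < r <= p.+1 -> p.+1 - r <= k -> A p.+1 k (ins s r).
Proof.
case/AP=> P drop_s r_range r_drop; have [Us Ss _] := is_permP _ _ P.
have Sm : size (map (bump r) s) = p by rewrite size_map.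
rewrite insE; apply/AP; split.
  apply/is_permP; split; rewrite ?size_rcons ?Sm //.
    rewrite rcons_uniq (map_inj_uniq (can_inj (bumpK r))) Us andbT.
    by apply/mapP=> -[x _ /eqP]; rewrite (negbTE (neq_bump r x)).
  move=> y; rewrite mem_rcons in_cons => /predU1P[-> //|/mapP[x xs ->]].
  by move: xs; rewrite (mem_is_perm _ P) /bump; lia.
move=> m mp; rewrite nth_rcons Sm.
have [mp'|pm] := ltnP m p.
  by rewrite (nth_map 0) ?Ss // /bump; have := drop_s m mp'; lia.
have -> : m = p by lia.
by rewrite eqxx.
Qed.

Lemma des_ins q s r : size s = q.+1 -> des (ins s r) = des s + (r <= nth 0 s q).
Proof.
move=> Ss; rewrite insE /des size_rcons size_map Ss -addn1 iotaD count_cat /= add0n addn0.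
have Sm : size (map (bump r) s) = q.+1 by rewrite size_map.
congr addn.
  apply: eq_in_count => m; rewrite mem_iota => /andP[_ mq] /=.
  have [mq1 mq2] : m.+1 < q.+1 /\ m < q.+1 by lia.
  by rewrite !nth_rcons Sm mq1 mq2 !(nth_map 0) ?Ss // ltn_bump2.
by rewrite !nth_rcons Sm ltnn eqxx ltnSn (nth_map 0) ?Ss // /bump; lia.
Qed.

Lemma nth_ins_size s r : nth 0 (ins s r) (size s) = r.
Proof. by rewrite insE nth_rcons size_map ltnn eqxx. Qed.

Local Open Scope ring_scope.

Definition jstat n k s : int := (nth 0%N s n.-1)%:Z - n%:Z + k%:Z.

Definition code n k s : int := (k.+1)%:Z * (des s)%:Z + jstat n k s.

Lemma phi_lastE n k s :
  phi_last n k s = n%:Z - k%:Z + modz ((n.+1 * k)%N%:Z - code n k s) (k.+1)%:Z.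
Proof.
rewrite /phi_last /= -/(jstat n k s) /modz.
have -> : (n.+1 * k)%N%:Z - (k.+1)%:Z * (des s)%:Z - jstat n k s
          = (n.+1 * k)%N%:Z - code n k s by rewrite /code [in RHS]opprD [in RHS]addrA.
by rewrite mulrC.
Qed.

Lemma jstat_range n k s : A n.+1 k s -> 0 <= jstat n.+1 k s <= k%:Z.
Proof. by move/A_last; rewrite /jstat /=; lia. Qed.

Lemma jstat_ins n k s r :
  size s = n.+1 -> jstat n.+2 k (ins s r) = r%:Z - n.+2%:Z + k%:Z.
Proof. by move=> Ss; rewrite /jstat /= -Ss nth_ins_size. Qed.

Lemma carry_count (k j j' x y D : int) :
  0 <= j <= k -> 0 <= j' <= k -> 0 <= x <= k -> 0 <= y <= k ->
  j + j' + (k + 1) * D = x + y + k -> ((j < x)%R : nat)%:Z + ((j' < y)%R : nat)%:Z = D.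
Proof.
move=> j_range j'_range x_range y_range sum_eq.
have [D0 D2] : 0 <= D /\ D <= 2 by nia.
have : D = 0 \/ D = 1 \/ D = 2 by lia.
by case=> [|[|]] D_eq; rewrite D_eq in sum_eq *; case: ltrP; case: ltrP; lia.
Qed.

Section Involution.

Variable k : nat.

Local Notation phi := (phi k).

Lemma phi_ins n s r :
  is_perm n.+1 s -> phi n.+2 (ins s r) = ins (phi n.+1 s) (absz (phi_last n.+2 k (ins s r))).
Proof. by move=> P; rewrite /= std_take_ins. Qed.

Lemma phi_last_range n s :
  A n.+1 k s -> 0 < phi_last n.+1 k s <= n.+1%:Z /\ n.+1%:Z - k%:Z <= phi_last n.+1 k s.
Proof.
move=> As; have [v_range v_drop] := A_last As.
rewrite phi_lastE; set c := (_ - code _ _ _).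
have := divz_eq c (k.+1)%:Z.
have := @modz_ge0 c (k.+1)%:Z isT.
have := @ltz_pmod c (k.+1)%:Z isT.
set j' := modz c _; set q := divz c _ => j'_lt j'_ge c_eq.
have : j' + (nth 0%N s n)%:Z = (k.+1)%:Z * ((n.+1)%:Z - (des s)%:Z - q).
  by move: c_eq; rewrite /c /code /jstat /=; lia.
set E := (_ - _ - q) => j'_eq.
have E_pos : 1 <= E by nia. (* j' + v is a positive multiple of k + 1 *)
nia.
Qed.

Lemma phi_last_phi n s t :
  0 <= jstat n k s <= k%:Z -> code n k s + code n k t = (n.+1 * k)%N%:Z ->
  phi_last n k t = (nth 0%N s n.-1)%:Z.
Proof.
move=> j_range code_sum; rewrite phi_lastE.
have -> : (n.+1 * k)%N%:Z - code n k t = (des s)%:Z * (k.+1)%:Z + jstat n k s.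
  by move: code_sum; rewrite /code; lia.
by rewrite modzMDl modz_small; move: j_range; rewrite /jstat; lia.
Qed.

Lemma A_phi_ins n s v :
  A n.+2 k (ins s v) -> A n.+1 k s -> A n.+1 k (phi n.+1 s) ->
  A n.+2 k (phi n.+2 (ins s v)).
Proof.
move=> Av As Asg; have /AP[Ps _] := As.
have [r_range r_drop] := phi_last_range Av.
by rewrite phi_ins //; apply: A_ins Asg _ _; lia.
Qed.

Lemma code_phi_ins n s v :
  A n.+2 k (ins s v) -> A n.+1 k s -> A n.+1 k (phi n.+1 s) ->
  code n.+1 k s + code n.+1 k (phi n.+1 s) = (n.+2 * k)%N%:Z ->
  code n.+2 k (ins s v) + code n.+2 k (phi n.+2 (ins s v)) = (n.+3 * k)%N%:Z.
Proof.
move=> Av As Asg code_sum.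
have /AP[Ps _] := As; have [_ Ss _] := is_permP _ _ Ps.
have /AP[Psg _] := Asg; have [_ Ssg _] := is_permP _ _ Psg.
have [r_range _] := phi_last_range Av.
have x_range := jstat_range As; have y_range := jstat_range Asg.
have := jstat_range Av; rewrite jstat_ins // => j_range.
have := phi_lastE n.+2 k (ins s v).
set c := (_ - code _ _ _) => r_eq.
have := divz_eq c (k.+1)%:Z; have := @modz_ge0 c (k.+1)%:Z isT.
have := @ltz_pmod c (k.+1)%:Z isT.
set j' := modz c _ in r_eq *; set q := divz c _ => j'_lt j'_ge c_eq.
have c_def : c = (n.+3 * k)%N%:Z - code n.+2 k (ins s v) by [].
rewrite phi_ins //; set sg := phi n.+1 s in Asg Ssg y_range code_sum *.
set r := phi_last _ _ _ in r_range r_eq *.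
have rE : (absz r)%:Z = r by apply: gez0_abs; lia.
have a_eq : (v <= nth 0%N s n)%N = (v%:Z - n.+2%:Z + k%:Z < jstat n.+1 k s).
  by rewrite /jstat /=; apply/idP/idP; lia.
have b_eq : (absz r <= nth 0%N sg n)%N = (r - n.+2%:Z + k%:Z < jstat n.+1 k sg).
  by rewrite /jstat /=; apply/idP/idP; lia.
(* j' was chosen so that j + j' = x + y + k modulo k + 1. *)
have j'_range : 0 <= r - n.+2%:Z + k%:Z <= k%:Z by lia.
have := carry_count (D := q + (v <= nth 0%N s n)%N%:Z - (des sg)%:Z)
  j_range j'_range x_range y_range.
rewrite -a_eq -b_eq.
move: code_sum c_def; rewrite /code (des_ins _ Ss) (des_ins _ Ssg) !jstat_ins // rE.
lia.
Qed.

Lemma phi_phi_ins n s v :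
  A n.+2 k (ins s v) -> A n.+1 k s -> A n.+1 k (phi n.+1 s) ->
  phi n.+1 (phi n.+1 s) = s ->
  code n.+2 k (ins s v) + code n.+2 k (phi n.+2 (ins s v)) = (n.+3 * k)%N%:Z ->
  phi n.+2 (phi n.+2 (ins s v)) = ins s v.
Proof.
move=> Av As Asg phiK code_sum.
have /AP[Ps _] := As; have /AP[Psg _] := Asg; have [_ Ss _] := is_permP _ _ Ps.
have last_v : phi_last n.+2 k (phi n.+2 (ins s v)) = v%:Z.
  by rewrite (phi_last_phi (jstat_range Av) code_sum) /= -Ss nth_ins_size.
have phi_v := phi_ins v Ps.
by rewrite {1}phi_v (phi_ins _ Psg) -phi_v last_v absz_nat phiK.
Qed.

Lemma phi_spec n s :
  A n.+1 k s ->
  [/\ A n.+1 k (phi n.+1 s),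
      code n.+1 k s + code n.+1 k (phi n.+1 s) = (n.+2 * k)%N%:Z
    & phi n.+1 (phi n.+1 s) = s].
Proof.
elim: n s => [|n IH] s As.
  by rewrite (A1 As) /code /jstat /des /=; split=> //; lia.
have /AP[P _] := As; have As' := A_std_take As.
rewrite -(ins_std_take P) in As *.
have [Asg code_sum phiK] := IH _ As'.
have code_sum' := code_phi_ins As As' Asg code_sum.
by split; [exact: A_phi_ins | exact: code_sum' | exact: phi_phi_ins].
Qed.

End Involution.

Theorem lemma2p3 (n k : nat) (s : seq nat) :
  (1 <= n)%N -> A n k s -> phi k n (phi k n s) = s.
Proof. by case: n => [//|n] _ /phi_spec[]. Qed.
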